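(* Let $\alpha$ generate an infinite cyclic discrete group $A=\langle\alpha\rangle$ and let $M$ be a polycontractable LC $A$-module. Then the map $x\mapsto \alpha x-x$ is an automorphism of the topological $A$-module $M$ (a bijective continuous homomorphism with continuous inverse).
   Context: An LC $A$-module is an LCA group with a continuous action of $A$ by topological automorphisms. Contractable: some element of $A$ acts as a contracting automorphism ($a^nx\to0$ as $n\to+\infty$ for all $x$). Polycontractable: a finite topological direct sum of closed contractable submodules; for $A=\langle\alpha\rangle$ this means a direct sum of a closed submodule contracted by $\alpha$ and one contracted by $\alpha^{-1}$. *)

From HB Require Import structures.
From mathcomp Require Import all_boot all_order all_algebra.
From mathcomp Require Import all_classical all_reals all_analysis.
Set Implicit Arguments. Unset Strict Implicit. Unset Printing Implicit Defensive.
Import Order.TTheory GRing.Theory Num.Theory.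
Local Open Scope classical_set_scope.
Local Open Scope ring_scope.

Definition LCA_group (M : topologicalZmodType) : Prop :=
  hausdorff_space M /\ locally_compact [set: M].

(** An action of the infinite cyclic group <alpha> on M by topological
    automorphisms is given by the topological automorphism [a] (image of
    alpha) with its inverse [ainv] (image of alpha^-1). *)
Definition topological_automorphism (M : topologicalZmodType) (a ainv : M -> M) : Prop :=
  {morph a : x y / x + y} /\ cancel a ainv /\ cancel ainv a /\
  continuous a /\ continuous ainv.

Definition is_submodule (M : topologicalZmodType) (a ainv : M -> M) (S : set M) : Prop :=
  S 0 /\ (forall x y, S x -> S y -> S (x - y)) /\
  (forall x, S x -> S (a x)) /\ (forall x, S x -> S (ainv x)).

Definition contracted_by (M : topologicalZmodType) (b : M -> M) (S : set M) : Prop :=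
  forall x, S x -> (fun n : nat => iter n b x) @ \oo --> (0 : M).

(** M is the topological direct sum of M1 and M2: the addition map
    M1 x M2 -> M is a bijection with continuous inverse x |-> (p1 x, p2 x). *)
Definition topological_direct_sum (M : topologicalZmodType) (M1 M2 : set M) : Prop :=
  M1 `&` M2 `<=` [set 0] /\
  exists p1 p2 : M -> M, continuous p1 /\ continuous p2 /\
    forall x, M1 (p1 x) /\ M2 (p2 x) /\ p1 x + p2 x = x.

Definition polycontractable_cyclic (M : topologicalZmodType) (a ainv : M -> M) : Prop :=
  exists M1 M2 : set M,
    closed M1 /\ closed M2 /\ is_submodule a ainv M1 /\ is_submodule a ainv M2 /\
    contracted_by a M1 /\ contracted_by ainv M2 /\ topological_direct_sum M1 M2.

From HB Require Import structures.
From mathcomp Require Import all_boot all_order all_algebra.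
From mathcomp Require Import all_classical all_reals all_analysis.
Set Implicit Arguments. Unset Strict Implicit. Unset Printing Implicit Defensive.
Import Order.TTheory GRing.Theory Num.Theory.
Local Open Scope classical_set_scope.
Local Open Scope ring_scope.

(* Write M = M1 + M2 with M1 contracted by a and M2 by a^-1; as
   a - 1 = -a (a^-1 - 1), it suffices to invert b - 1, continuously at 0, on a
   closed b-stable subgroup S contracted by b.  A Baire category argument in the
   locally compact group S makes the contraction uniform on compact sets, so
   for a compact neighbourhood L of 0 in S some power T = b^k maps x + T L into
   L whenever x is near 0.  The nested compact sets (x + T)^j L then meet in a
   fixed point z = x + T z, and y = -(z + b z + ... + b^(k-1) z) solves
   b y - y = x.  Arbitrary x are first contracted into that neighbourhood, and
   b - 1 is injective on S since a fixed point of a contraction is 0. *)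

Section AdditiveMorphism.
Variables (U V : zmodType) (f : U -> V).
Hypothesis fD : {morph f : x y / x + y}.

Lemma morph_add0 : f 0 = 0.
Proof. by apply: (@addrI _ (f 0)); rewrite -fD !addr0. Qed.

Lemma morph_addN x : f (- x) = - f x.
Proof. by apply: (@addrI _ (f x)); rewrite -fD !subrr morph_add0. Qed.

Lemma morph_addB x y : f (x - y) = f x - f y.
Proof. by rewrite fD morph_addN. Qed.

Lemma morph_add_sum I (r : seq I) (F : I -> U) :
  f (\sum_(i <- r) F i) = \sum_(i <- r) f (F i).
Proof. exact: (big_morph f fD morph_add0). Qed.

Lemma can_morph_add (g : V -> U) : cancel f g -> cancel g f ->
  {morph g : x y / x + y}.
Proof. by move=> fK gK x y; apply: (can_inj fK); rewrite fD !gK. Qed.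

End AdditiveMorphism.

Section AdditiveIteration.
Variables (V : zmodType) (f : V -> V).
Hypothesis fD : {morph f : x y / x + y}.

Lemma iter_morph_add n : {morph iter n f : x y / x + y}.
Proof. by elim: n => // n IH x y; rewrite !iterS IH fD. Qed.

Lemma telescope_iter n x :
  f (\sum_(i < n) iter i f x) - \sum_(i < n) iter i f x = iter n f x - x.
Proof.
rewrite (morph_add_sum fD) -sumrB.
rewrite -(big_mkord xpredT (fun i => iter i.+1 f x - iter i f x)).
exact: telescope_sumr.
Qed.

Lemma fixpoint_expand x z n : z = x + f z ->
  z = \sum_(i < n) iter i f x + iter n f z.
Proof.
move=> zE; elim: n => [|n IH]; first by rewrite big_ord0 add0r.
by rewrite big_ord_recr /= -addrA -iterS iterSr -iter_morph_add -zE.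
Qed.

Lemma iter_affineB x n u v :
  iter n (fun l => x + f l) u - iter n (fun l => x + f l) v =
  iter n f u - iter n f v.
Proof.
elim: n => // n IH.
by rewrite !iterS opprD addrACA subrr add0r -!(morph_addB fD) IH.
Qed.

End AdditiveIteration.

Lemma can_iter (T : Type) (f g : T -> T) n :
  cancel f g -> cancel (iter n f) (iter n g).
Proof. by move=> fK; elim: n => // n IH x; rewrite iterSr iterS fK IH. Qed.

Section Topology.
Variable T : topologicalType.

Lemma hausdorff_nbhs_eq (p q : T) : hausdorff_space T ->
  (forall U, nbhs p U -> U q) -> q = p.
Proof.
move=> hT pq; apply/esym/hT => A B nA nB.
by exists q; split; [exact: pq | exact: nbhs_singleton].
Qed.

Lemma continuous_iter (f : T -> T) n : continuous f -> continuous (iter n f).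
Proof.
move=> cf; elim: n => [|n IH] x; first exact: cvg_id.
exact: (continuous_comp (IH x) (cf _)).
Qed.

Lemma nested_compact_meet (C : set T) (K : nat -> set T) : compact C ->
  (forall n, closed (K n)) -> K 0%N `<=` C -> (forall n, K n.+1 `<=` K n) ->
  (forall n, K n !=set0) -> exists z, forall n, K n z.
Proof.
move=> cC clK K0C Kdec Kn0.
have Kle m n : (m <= n)%N -> K n `<=` K m.
  move/subnK <-; elim: (n - m)%N => // k IH.
  by rewrite addSn; apply: subset_trans IH; exact: Kdec.
have KF : ProperFilter (filter_from setT K).
  apply: filter_from_proper; last by move=> n _; exact: Kn0.
  apply: filter_from_filter; first by exists 0%N.
  move=> i j _ _; exists (maxn i j) => // x Kx.
  by split; apply: Kle Kx; rewrite ?leq_maxl ?leq_maxr.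
have [z [_ clz]] := cC _ KF (ex_intro2 _ _ 0%N I K0C).
by exists z => n; apply: clK => B nB; apply: clz => //; exists n.
Qed.

Lemma locally_compact_nbhs (x : T) : locally_compact [set: T] ->
  exists2 B, nbhs x B & compact B /\ closed B.
Proof. by move=> lcT; have := lcT x I; rewrite withinET. Qed.

Lemma locally_compact_regular (x : T) (U : set T) :
  hausdorff_space T -> locally_compact [set: T] -> nbhs x U ->
  exists2 W, nbhs x W & closure W `<=` U.
Proof.
move=> hT lcT nU; have [V nV [cV _]] := locally_compact_nbhs x lcT.
exact: (compact_regular hT cV nV nU).
Qed.

Lemma compact_cover_bounded (K : set T) (G : nat -> set T) :
  hausdorff_space T -> compact K -> (forall j, open (G j)) ->
  (forall x, K x -> exists j, G j x) ->
  exists m, forall x, K x -> exists2 j, (j <= m)%N & G j x.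
Proof.
move=> hT cK oG KG; apply: contrapT => unbounded.
pose Kc m := K `&` \bigcap_(j in [set j | (j <= m)%N]) ~` G j.
have [z Kcz] : exists z, forall m, Kc m z.
  apply: (nested_compact_meet cK).
  - move=> m; apply: closedI; first exact: compact_closed.
    by apply: closed_bigI => j _; rewrite closedC.
  - by move=> x [].
  - by move=> m x [Kx NG]; split=> // j /= jm; apply: NG; exact: leqW.
  - move=> m; apply: contrapT => Kc0; apply: unbounded; exists m => x Kx.
    apply: contrapT => NG; apply: Kc0; exists x; split=> // j /= jm Gj.
    by apply: NG; exists j.
have [j Gz] := KG z (proj1 (Kcz 0%N)).
by have [_ /(_ j (leqnn j))] := Kcz j.
Qed.

Lemma baire_closed_cover (S : set T) (E : nat -> set T) :
  hausdorff_space T -> locally_compact [set: T] -> closed S -> S !=set0 ->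
  (forall n, closed (E n)) -> (forall x, S x -> exists n, E n x) ->
  exists n x B, [/\ S x, nbhs x B & S `&` B `<=` E n].
Proof.
move=> hT lcT clS [s0 Ss0] clE covE; apply: contrapT => noInt.
pose good (p : T * set T) := S p.1 /\ nbhs p.1 p.2.
pose step np q := good np.2 -> good q /\ closure q.2 `<=` np.2.2 `\` E np.1.
have [next nextP] : {next & forall np, step np (next np)}.
  apply: choice => -[n [x B]]; rewrite /step /=.
  have [[Sx nB]|] := pselect (good (x, B)); last by exists (x, B).
  have [y [[Sy By] NEy]] : exists y, (S `&` B°) y /\ ~ E n y.
    apply: contrapT => NE; apply: noInt; exists n, x, B°.
    split=> //; first exact: nbhs_interior.
    by move=> y SBy; apply: contrapT => NEy; apply: NE; exists y.
  have nO : nbhs y (B° `\` E n).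
    apply: open_nbhs_nbhs; split=> //.
    by apply: openI; [exact: open_interior | rewrite openC].
  have [W nW clW] := locally_compact_regular hT lcT nO.
  exists (y, W) => _; split=> // z /clW [/interior_subset].
  by split.
have [B0 nB0 [cB0 _]] := locally_compact_nbhs s0 lcT.
pose chain := fix chain n := if n is k.+1 then next (k, chain k) else (s0, B0).
have chain_good n : good (chain n).
  by elim: n => [|n IH]; [split | exact: (proj1 (nextP (n, chain n) IH))].
have chain_sub n : closure (chain n.+1).2 `<=` (chain n).2 `\` E n.
  exact: (proj2 (nextP (n, chain n) (chain_good n))).
pose K n := S `&` closure (chain n.+1).2.
have [z Kz] : exists z, forall n, K n z.
  apply: (nested_compact_meet cB0).
  - by move=> n; apply: closedI => //; exact: closed_closure.
  - by move=> x [_ /chain_sub[]].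
  - move=> n x [Sx /chain_sub[+ _]]; split=> //; exact: subset_closure.
  - move=> n; exists (chain n.+1).1; split; first by case: (chain_good n.+1).
    by apply: subset_closure; apply: nbhs_singleton; case: (chain_good n.+1).
have [n Enz] := covE z (proj1 (Kz 0%N)).
by have [_ /chain_sub[]] := Kz n.
Qed.

End Topology.

Section TopologicalZmodule.
Variable M : topologicalZmodType.

Lemma continuous_addf (T : topologicalType) (f g : T -> M) x :
  {for x, continuous f} -> {for x, continuous g} ->
  {for x, continuous (fun y => f y + g y)}.
Proof.
move=> cf cg.
apply: (@continuous_comp _ _ _ (fun y => (f y, g y)) (fun p : M * M => p.1 + p.2)).
  exact: cvg_pair.
exact: add_continuous.
Qed.

Lemma continuous_oppf (T : topologicalType) (f : T -> M) x :
  {for x, continuous f} -> {for x, continuous (fun y => - f y)}.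
Proof. by move=> cf; apply: (continuous_comp cf); exact: opp_continuous. Qed.

Lemma continuous_subf (T : topologicalType) (f g : T -> M) x :
  {for x, continuous f} -> {for x, continuous g} ->
  {for x, continuous (fun y => f y - g y)}.
Proof.
by move=> cf cg; apply: continuous_addf => //; exact: continuous_oppf.
Qed.

Lemma continuous_sumf (T : topologicalType) (I : Type) (r : seq I)
    (F : I -> T -> M) :
  (forall i, continuous (F i)) -> continuous (fun x => \sum_(i <- r) F i x).
Proof.
move=> cF; elim: r => [|i r IH].
  have -> : (fun x => \sum_(j <- [::]) F j x) = fun=> 0.
    by apply: funext => x; rewrite big_nil.
  by move=> x; exact: cvg_cst.
have -> : (fun x => \sum_(j <- i :: r) F j x) =
    fun x => F i x + \sum_(j <- r) F j x.
  by apply: funext => x; rewrite big_cons.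
by move=> x; apply: continuous_addf; [exact: cF | exact: IH].
Qed.

Lemma nbhs_shift (x : M) (A : set M) : nbhs x A <-> nbhs 0 [set y | A (x + y)].
Proof.
split=> [nA | nA0].
  have cT : {for 0, continuous (fun y => x + y)}.
    by apply: (@continuous_addf _ (fun=> x) id); [exact: cvg_cst | exact: cvg_id].
  by have := cT A; rewrite /= addr0 => /(_ nA).
have cT : {for x, continuous (fun y => y - x)}.
  by apply: (@continuous_subf _ id (fun=> x)); [exact: cvg_id | exact: cvg_cst].
have := cT [set y | A (x + y)]; rewrite /= subrr => /(_ nA0).
rewrite -[X in X -> _]/(nbhs x [set y | A (x + (y - x))]).
by apply: filterS => y /=; rewrite addrC subrK.
Qed.

Lemma nbhs0_add (U : set M) : nbhs 0 U ->
  exists2 W, nbhs 0 W & forall x y, W x -> W y -> U (x + y).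
Proof.
move=> nU; have : nbhs ((0 : M), (0 : M)) [set p : M * M | U (p.1 + p.2)].
  by apply: (@add_continuous M (0, 0)); rewrite /= addr0.
case=> -[A B] /= [nA nB] AB.
exists (A `&` B); first exact: filterI.
by move=> x y [Ax _] [_ By]; exact: (AB (x, y)).
Qed.

Lemma nbhs0_opp (U : set M) : nbhs 0 U -> nbhs 0 [set x | U (- x)].
Proof. by move=> nU; apply: (@opp_continuous M 0); rewrite oppr0. Qed.

Lemma nbhs0_sub (U : set M) : nbhs 0 U ->
  exists2 W, nbhs 0 W & forall x y, W x -> W y -> U (x - y).
Proof.
move=> /nbhs0_add[W nW WU].
exists (W `&` [set x | W (- x)]); first by apply: filterI => //; exact: nbhs0_opp.
by move=> x y [Wx _] [_ Wy]; exact: WU.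
Qed.

Lemma affine_fixed_point (f : M -> M) (L : set M) (x : M) :
  hausdorff_space M -> {morph f : u v / u + v} -> continuous f ->
  compact L -> L !=set0 -> (forall l, L l -> L (x + f l)) ->
  (forall U, nbhs 0 U -> exists N, forall l, L l -> U (iter N f l)) ->
  exists2 z, L z & z = x + f z.
Proof.
move=> hM fD cf cL [l0 Ll0] Lphi fL0.
pose phi l := x + f l.
have cphi : continuous phi.
  by move=> y; apply: continuous_addf; [exact: cvg_cst | exact: cf].
pose A j := iter j phi @` L.
have [z Az] : exists z, forall j, A j z.
  apply: (nested_compact_meet cL).
  - move=> j; apply: compact_closed hM _; apply: continuous_compact cL.
    exact/continuous_subspaceT/continuous_iter.
  - by move=> _ [l Ll <-].
  - by move=> j _ [l Ll <-]; exists (phi l); [exact: Lphi | rewrite -iterSr].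
  - by move=> j; exists (iter j phi l0), l0.
exists z; first by have [l Ll <-] := Az 0%N.
apply/eqP; rewrite -subr_eq0; apply/eqP/(hausdorff_nbhs_eq hM) => U nU.
have [W nW WU] := nbhs0_sub nU.
have [N WN] := fL0 W nW.
have [l1 Ll1 z_l1] := Az N.+1; have [l2 Ll2 z_l2] := Az N.
rewrite -[x + f z]/(phi z) -{1}z_l1 -z_l2 -iterS !iterSr (iter_affineB fD).
by apply: WU; apply: WN; exact: Lphi.
Qed.

End TopologicalZmodule.

Lemma additive_continuous (M N : topologicalZmodType) (f : M -> N) :
  {morph f : x y / x + y} -> {for 0, continuous f} -> continuous f.
Proof.
move=> fD cf x A nA; apply/nbhs_shift.
have : nbhs (f 0) [set u | A (f x + u)].
  by rewrite (morph_add0 fD); exact: (nbhs_shift (f x) A).1.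
move=> /cf nfA; apply: (@filterS _ _ _ (f @^-1` [set u | A (f x + u)])) nfA.
by move=> y /=; rewrite fD.
Qed.

Definition sub1_invertible_on (M : topologicalZmodType) (a : M -> M)
    (S : set M) :=
  [/\ forall y, S y -> a y = y -> y = 0,
      forall x, S x -> exists y, a y - y = x &
      forall U, nbhs 0 U -> exists2 V, nbhs 0 V &
        forall x, S x -> V x -> exists2 y, U y & a y - y = x].

Section Contraction.
Variable M : topologicalZmodType.
Hypotheses (hM : hausdorff_space M) (lcM : locally_compact [set: M]).
Variables b binv : M -> M.
Hypotheses (bD : {morph b : x y / x + y}) (bK : cancel b binv)
  (bKV : cancel binv b) (cb : continuous b).
Variable S : set M.
Hypotheses (clS : closed S) (S0 : S 0) (SB : forall x y, S x -> S y -> S (x - y))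
  (Sb : forall x, S x -> S (b x)) (contr : contracted_by b S).

Lemma S_add x y : S x -> S y -> S (x + y).
Proof.
by move=> Sx Sy; rewrite -[y]opprK -[- y]sub0r; apply: SB => //; exact: SB.
Qed.

Lemma S_iter n x : S x -> S (iter n b x).
Proof. by move=> Sx; elim: n => // n IH; rewrite iterS; exact: Sb. Qed.

Lemma contracted_fixed_eq0 y : S y -> b y = y -> y = 0.
Proof.
move=> Sy fix_y; apply: (hausdorff_nbhs_eq hM) => U nU.
have [N _ UN] := contr Sy nU.
by have := UN N (leqnn N); rewrite /= (iter_fix N fix_y).
Qed.

(* The Baire category theorem, applied to the closed sets of points whose
   whole tail of iterates stays in a closed neighbourhood of 0. *)
Lemma contracted_near0 (U : set M) : nbhs 0 U ->
  exists n0, exists2 V, nbhs 0 V &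
    forall y n, S y -> V y -> (n0 <= n)%N -> U (iter n b y).
Proof.
move=> nU; have [W0 nW0 W0U] := nbhs0_sub nU.
have [W1 nW1 clW1] := locally_compact_regular hM lcM nW0.
pose E N := S `&` \bigcap_(n in [set n | (N <= n)%N]) (iter n b @^-1` closure W1).
have clE N : closed (E N).
  apply: closedI => //; apply: closed_bigI => n _.
  apply: preimage_closed; last exact: closed_closure.
  by move=> x _; exact: continuous_iter.
have covE x : S x -> exists N, E N x.
  move=> Sx; have [N _ W1N] := contr Sx nW1.
  by exists N; split=> // n /= Nn; apply: subset_closure; exact: W1N.
have [n0 [x0 [B [Sx0 nB EB]]]] :=
  baire_closed_cover hM lcM clS (ex_intro _ 0 S0) clE covE.
exists n0, [set y | B (x0 + y)]; first exact: (nbhs_shift x0 B).1.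
move=> y n Sy By n0n.
have [_ /(_ n n0n) /clW1 W0y] := EB _ (conj (S_add Sx0 Sy) By).
have [_ /(_ n n0n) /clW1 W0x0] := EB _ (conj Sx0 (nbhs_singleton nB)).
have := W0U _ _ W0y W0x0.
by rewrite -(morph_addB (iter_morph_add bD n)) addrC addKr.
Qed.

Lemma contracted_uniform (K U : set M) : compact K -> K `<=` S -> nbhs 0 U ->
  exists N, forall n x, (N <= n)%N -> K x -> U (iter n b x).
Proof.
move=> cK KS nU; have [n0 [V nV VU]] := contracted_near0 nU.
have [m Km] : exists m, forall x, K x -> exists2 j, (j <= m)%N & V° (iter j b x).
  apply: (compact_cover_bounded hM cK).
    move=> j; apply: open_comp; last exact: open_interior.
    by move=> x _; exact: continuous_iter.
  move=> x Kx; have [j _ Vj] := contr (KS x Kx) (nbhs_interior nV).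
  by exists j; apply: Vj => /=.
exists (m + n0)%N => n x mn Kx; have [j jm Vj] := Km x Kx.
have jn : (j <= n)%N by apply: leq_trans mn; exact: leq_trans (leq_addr _ _).
rewrite -(subnK jn) iterD; apply: VU.
- by apply: S_iter; exact: KS.
- exact: interior_subset.
- by rewrite leq_subRL //; apply: leq_trans mn; rewrite leq_add2r.
Qed.

Lemma compact_affine_invariant : exists L D k, [/\ compact L, L `<=` S, L 0,
  nbhs 0 D & forall x l, S x -> D x -> L l -> L (x + iter k.+1 b l)].
Proof.
have [B0 nB0 [cB0 clB0]] := locally_compact_nbhs 0 lcM.
have cL : compact (S `&` B0).
  by apply: (subclosed_compact _ cB0); [exact: closedI | exact: subIsetr].
have [D nD DB] := nbhs0_add nB0.
have [N DN] := contracted_uniform cL (@subIsetl _ S B0) nD.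
exists (S `&` B0), D, N; split=> //.
- by split=> //; exact: nbhs_singleton.
- move=> x l Sx Dx [Sl Bl]; split; first by apply: S_add => //; exact: S_iter.
  by apply: DB => //; apply: DN => //; split.
Qed.

(* For [x] near 0 the equation [z = x + T z], with [T := b^(k+1)], has a
   solution in a fixed compact set; [y := -(z + b z + ... + b^k z)] then solves
   [b y - y = x], and it is small because [z] is the sum of the small terms
   [T^j x], [j < J], and of [T^J z], which is uniformly small on that set. *)
Lemma contracted_sub1_solvable_near0 (U : set M) : nbhs 0 U ->
  exists2 V, nbhs 0 V & forall x, S x -> V x -> exists2 y, U y & b y - y = x.
Proof.
move=> nU; have [L [D [k [cL LS L0 nD Linv]]]] := compact_affine_invariant.
pose T := iter k.+1 b.
have TD : {morph T : u v / u + v} by exact: iter_morph_add.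
have T_small W : nbhs 0 W -> exists J, forall l, L l -> W (iter J T l).
  move=> nW; have [J WJ] := contracted_uniform cL LS nW.
  by exists J => l Ll; rewrite -iterM; apply: WJ => //; exact: leq_pmulr.
pose Q w := - \sum_(i < k.+1) iter i b w.
have QD : {morph Q : u v / u + v}.
  move=> u v; rewrite /Q -opprD -big_split /=.
  by under eq_bigr do rewrite (iter_morph_add bD).
have cQ : continuous Q.
  move=> w; apply: continuous_oppf.
  by apply: continuous_sumf => i; exact: continuous_iter.
have QE w : b (Q w) - Q w = w - T w.
  by rewrite (morph_addN bD) -opprD (telescope_iter bD) opprB.
have [U1 nU1 U1U] : exists2 U1, nbhs 0 U1 &
    forall u v, U1 u -> U1 v -> U (Q (u + v)).
  apply: (@nbhs0_add _ (Q @^-1` U)).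
  by apply: (cQ 0); rewrite (morph_add0 QD).
have [J U1J] := T_small _ nU1.
pose s x := \sum_(j < J) iter j T x.
have cs : continuous s.
  by apply: continuous_sumf => j; apply: continuous_iter; exact: continuous_iter.
have ns : nbhs 0 (s @^-1` U1).
  apply: (cs 0); rewrite /s big1 // => j _.
  exact: (morph_add0 (iter_morph_add TD j)).
exists (D `&` s @^-1` U1); first exact: filterI.
move=> x Sx [Dx s_x].
have [z Lz zE] := affine_fixed_point hM TD (continuous_iter (n := k.+1) cb) cL
  (ex_intro _ 0 L0) (fun l => Linv x l Sx Dx) T_small.
exists (Q z); last by rewrite QE {1}zE addrK.
by rewrite (fixpoint_expand TD J zE); apply: U1U => //; exact: U1J.
Qed.

Lemma contracted_sub1_surjective x : S x -> exists y, b y - y = x.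
Proof.
move=> Sx; have [V nV solV] := contracted_sub1_solvable_near0 filterT.
have [m _ Vm] := contr Sx nV.
have [y _ yE] := solV _ (S_iter m Sx) (Vm m (leqnn m)).
exists (iter m binv y); apply: (can_inj (can_iter m bK)).
by rewrite (morph_addB (iter_morph_add bD m)) -iterSr iterS (can_iter m bKV).
Qed.

Lemma sub1_inv_solution x y : b y - y = b x -> binv (- y) - - y = x.
Proof.
have binvD := can_morph_add bD bK bKV.
move=> /(congr1 binv); rewrite (morph_addB binvD) !bK => <-.
by rewrite (morph_addN binvD) opprK addrC.
Qed.

Lemma contracted_sub1_invertible : sub1_invertible_on b S.
Proof.
split; [exact: contracted_fixed_eq0 | exact: contracted_sub1_surjective |].
exact: contracted_sub1_solvable_near0.
Qed.

Lemma contracted_inv_sub1_invertible : sub1_invertible_on binv S.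
Proof.
split.
- move=> y Sy fix_y; apply: contracted_fixed_eq0 => //.
  by rewrite -{1}fix_y bKV.
- move=> x /Sb/contracted_sub1_surjective[y yE].
  by exists (- y); exact: sub1_inv_solution.
move=> U /nbhs0_opp/contracted_sub1_solvable_near0[V nV solV].
exists (b @^-1` V); first by have := @cb 0 V; rewrite (morph_add0 bD); exact.
move=> x Sx Vbx; have [y Uy yE] := solV _ (Sb Sx) Vbx.
by exists (- y) => //; exact: sub1_inv_solution.
Qed.

End Contraction.

Section DirectSum.
Variables (M : topologicalZmodType) (a : M -> M) (M1 M2 : set M) (p1 p2 : M -> M).
Hypotheses (aD : {morph a : x y / x + y})
  (M1_0 : M1 0) (M1B : forall x y, M1 x -> M1 y -> M1 (x - y))
  (M1a : forall x, M1 x -> M1 (a x))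
  (M2_0 : M2 0) (M2B : forall x y, M2 x -> M2 y -> M2 (x - y))
  (M2a : forall x, M2 x -> M2 (a x))
  (M12 : M1 `&` M2 `<=` [set 0]) (cp1 : continuous p1) (cp2 : continuous p2)
  (p12 : forall x, M1 (p1 x) /\ M2 (p2 x) /\ p1 x + p2 x = x)
  (inv1 : sub1_invertible_on a M1) (inv2 : sub1_invertible_on a M2).

Let f x := a x - x.

Let fD : {morph f : x y / x + y}.
Proof. by move=> x y; rewrite /f aD opprD addrACA. Qed.

Lemma direct_sum_unique u1 u2 v1 v2 : M1 u1 -> M1 v1 -> M2 u2 -> M2 v2 ->
  u1 + u2 = v1 + v2 -> u1 = v1 /\ u2 = v2.
Proof.
move=> M1u1 M1v1 M2u2 M2v2 uv.
have d0 : u1 - v1 = 0.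
  apply: M12; split; first exact: M1B.
  by rewrite -[u1](addrK u2) uv addrAC [v1 + v2]addrC addrK; exact: M2B.
move/eqP: d0; rewrite subr_eq0 => /eqP u1v1; split=> //.
by move: uv; rewrite u1v1 => /addrI.
Qed.

Lemma direct_sum_proj0 : p1 0 = 0 /\ p2 0 = 0.
Proof.
have [M1p [M2p p0]] := p12 0.
by apply: direct_sum_unique => //; rewrite p0 addr0.
Qed.

Lemma direct_sum_sub1_eq0 x : f x = 0 -> x = 0.
Proof.
move=> /eqP; rewrite subr_eq0 => /eqP ax.
have [M1p [M2p px]] := p12 x.
have [a1 a2] : a (p1 x) = p1 x /\ a (p2 x) = p2 x.
  apply: direct_sum_unique => //; [exact: M1a | exact: M2a | by rewrite -aD px].
case: inv1 => fix1 _ _; case: inv2 => fix2 _ _.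
by rewrite -px (fix1 _ M1p a1) (fix2 _ M2p a2) addr0.
Qed.

Lemma direct_sum_sub1_inj : injective f.
Proof.
move=> x y fxy; apply/eqP; rewrite -subr_eq0; apply/eqP/direct_sum_sub1_eq0.
by rewrite (morph_addB fD) fxy subrr.
Qed.

Lemma direct_sum_sub1_surjective x : exists y, f y = x.
Proof.
have [M1p [M2p px]] := p12 x.
case: inv1 => _ /(_ _ M1p)[y1 y1E] _; case: inv2 => _ /(_ _ M2p)[y2 y2E] _.
by exists (y1 + y2); rewrite fD /f y1E y2E.
Qed.

Lemma direct_sum_sub1_inverse_continuous g : cancel g f -> continuous g.
Proof.
move=> gK.
have gD : {morph g : x y / x + y}.
  by move=> x y; apply: direct_sum_sub1_inj; rewrite fD !gK.
apply: additive_continuous => // A; rewrite (morph_add0 gD) => nA.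
have [U1 nU1 U1A] := nbhs0_add nA.
case: inv1 => _ _ /(_ _ nU1)[V1 nV1 sol1].
case: inv2 => _ _ /(_ _ nU1)[V2 nV2 sol2].
have [p1_0 p2_0] := direct_sum_proj0.
have nV1' : nbhs 0 (p1 @^-1` V1) by have := @cp1 0 V1; rewrite p1_0; exact.
have nV2' : nbhs 0 (p2 @^-1` V2) by have := @cp2 0 V2; rewrite p2_0; exact.
apply: filterS (filterI nV1' nV2') => x [V1x V2x].
have [M1p [M2p px]] := p12 x.
have [y1 U1y1 y1E] := sol1 _ M1p V1x; have [y2 U1y2 y2E] := sol2 _ M2p V2x.
suff gx : g x = y1 + y2 by rewrite /= gx; exact: U1A.
by apply: direct_sum_sub1_inj; rewrite gK fD /f y1E y2E.
Qed.

Lemma direct_sum_sub1_homeomorphism :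
  exists g, cancel f g /\ cancel g f /\ continuous g.
Proof.
have [g gK] := choice direct_sum_sub1_surjective.
exists g; split; last by split=> //; exact: direct_sum_sub1_inverse_continuous.
by move=> x; apply: direct_sum_sub1_inj; rewrite gK.
Qed.

End DirectSum.

Theorem mainTheorem5 (M : topologicalZmodType) (a ainv : M -> M) :
  LCA_group M ->
  topological_automorphism a ainv ->
  polycontractable_cyclic a ainv ->
  let f := fun x : M => a x - x in
  {morph f : x y / x + y} /\ (forall x, f (a x) = a (f x)) /\ continuous f /\
  exists g : M -> M, cancel f g /\ cancel g f /\ continuous g.
Proof.
move=> [hM lcM] [aD [aK [aKV [ca cainv]]]].
move=> [M1 [M2 [cl1 [cl2 [[M1_0 [M1B [M1a _]]] [[M2_0 [M2B [M2a M2ainv]]]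
  [c1 [c2 [M12 [p1 [p2 [cp1 [cp2 p12]]]]]]]]]]]]] f.
have inv1 := contracted_sub1_invertible hM lcM aD aK aKV ca cl1 M1_0 M1B M1a c1.
have inv2 := contracted_inv_sub1_invertible hM lcM (can_morph_add aD aK aKV)
  aKV aK cainv cl2 M2_0 M2B M2ainv c2.
split; first by move=> x y; rewrite /f aD opprD addrACA.
split; first by move=> x; rewrite /f (morph_addB aD).
split; first by move=> x; apply: continuous_subf; [exact: ca | exact: cvg_id].
exact: (direct_sum_sub1_homeomorphism aD M1_0 M1B M1a M2_0 M2B M2a M12
  cp1 cp2 p12 inv1 inv2).
Qed.
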